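(* Let $\phi:(\mathcal C,S)\to(\mathcal D,T)$ be an admissible morphism from a finite quasi-schemoid whose underlying category is a groupoid to a basic quasi-schemoid, and let $n^\phi_\sigma$ ($\sigma\in S$) be the integers such that $\#(\phi^{-1}(g)\cap x\sigma)=n^\phi_\sigma$ for all $x\in ob(\mathcal C)$ and $g\in\phi(\sigma)$ with $t(g)=\phi(x)$. Then for all $\pi,\rho\in S$ and $\tau\in T$, $$\sum_{\sigma\in S:\ \phi(\sigma)=\tau}p^\sigma_{\pi\rho}\,n^\phi_\sigma=p^\tau_{\phi(\pi)\phi(\rho)}\,n^\phi_\pi\,n^\phi_\rho .$$
   Context: Write $s(f),t(f)$ for source and target. A quasi-schemoid is a pair $(\mathcal C,S)$ with $\mathcal C$ a small category and $S$ a partition of $mor(\mathcal C)$ into nonempty blocks such that for all $\sigma,\tau,\mu\in S$ and $f,g\in\mu$ the sets $\{(a,b)\in\sigma\times\tau: s(a)=t(b), a\circ b=f\}$ and the analogous set for $g$ have equal cardinality, denoted $p^\mu_{\sigma\tau}$. It is finite if $mor(\mathcal C)$ is finite; unital if every block meeting $\{1_x\}$ is contained in it; basic if unital and $\mathcal C$ is a groupoid. A morphism of quasi-schemoids $\phi$ is a functor such that each $\phi(\sigma)$ lies in a unique block of the target, also denoted $\phi(\sigma)$. $\phi$ is admissible if for every $x\in ob(\mathcal C)$, $\sigma\in S$ and $g\in\phi(\sigma)$ with $t(g)=\phi(x)$ there exists $f\in\sigma$ with $t(f)=x$ and $\phi(f)=g$. $x\sigma=\{f\in\sigma:t(f)=x\}$;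 the integers $n^\phi_\sigma$ exist and are positive under these hypotheses. *)

From mathcomp Require Import all_boot.
Set Implicit Arguments. Unset Strict Implicit. Unset Printing Implicit Defensive.

Record category (O M : Type) := Category {
  src : M -> O;
  tgt : M -> O;
  idm : O -> M;
  comp : M -> M -> M;
  src_idm : forall x, src (idm x) = x;
  tgt_idm : forall x, tgt (idm x) = x;
  src_comp : forall a b, src a = tgt b -> src (comp a b) = src b;
  tgt_comp : forall a b, src a = tgt b -> tgt (comp a b) = tgt a;
  comp_idl : forall f, comp (idm (tgt f)) f = f;
  comp_idr : forall f, comp f (idm (src f)) = f;
  comp_assoc : forall a b c, src a = tgt b -> src b = tgt c ->
    comp a (comp b c) = comp (comp a b) c
}.

(* A partition S of mor(C) into nonempty blocks is encoded by a surjective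
   labelling lab : M -> L; blocks are the fibres of lab, indexed by L. *)

Definition comp_pairs (O M L : Type) (C : category O M) (lab : M -> L)
  (sigma tau : L) (f : M) : M * M -> Prop :=
  fun ab => [/\ lab ab.1 = sigma, lab ab.2 = tau,
               src C ab.1 = tgt C ab.2 & comp C ab.1 ab.2 = f].

Definition same_card (T : Type) (A B : T -> Prop) : Prop :=
  exists h : {x | A x} -> {x | B x}, bijective h.

Definition quasi_schemoid (O M L : Type) (C : category O M) (lab : M -> L) :=
  (forall mu : L, exists f, lab f = mu) /\
  (forall sigma tau mu f g, lab f = mu -> lab g = mu ->
     same_card (comp_pairs C lab sigma tau f) (comp_pairs C lab sigma tau g)).

Definition unital (O M L : Type) (C : category O M) (lab : M -> L) :=
  forall x f, lab f = lab (idm C x) -> exists y, f = idm C y.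

Definition groupoid (O M : Type) (C : category O M) :=
  forall f, exists g, [/\ src C g = tgt C f, tgt C g = src C f,
                        comp C g f = idm C (src C f) &
                        comp C f g = idm C (tgt C f)].

Definition basic (O M L : Type) (C : category O M) (lab : M -> L) :=
  [/\ quasi_schemoid C lab, unital C lab & groupoid C].

Definition functor (CO CM DO DM : Type) (C : category CO CM) (D : category DO DM)
  (Fo : CO -> DO) (Fm : CM -> DM) :=
  [/\ forall f, src D (Fm f) = Fo (src C f),
      forall f, tgt D (Fm f) = Fo (tgt C f),
      forall x, Fm (idm C x) = idm D (Fo x) &
      forall a b, src C a = tgt C b -> Fm (comp C a b) = comp D (Fm a) (Fm b)].

(* Flab sigma is the block of T containing phi(sigma). *)
Definition qs_morphism (CO CM SC DO DM TD : Type)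
  (C : category CO CM) (labC : CM -> SC) (D : category DO DM) (labD : DM -> TD)
  (Fo : CO -> DO) (Fm : CM -> DM) (Flab : SC -> TD) :=
  functor C D Fo Fm /\ (forall f, labD (Fm f) = Flab (labC f)).

Definition admissible (CO CM SC DO DM TD : Type)
  (C : category CO CM) (labC : CM -> SC) (D : category DO DM) (labD : DM -> TD)
  (Fo : CO -> DO) (Fm : CM -> DM) (Flab : SC -> TD) :=
  forall (x : CO) (sigma : SC) (g : DM), labD g = Flab sigma -> tgt D g = Fo x ->
    exists f, [/\ labC f = sigma, tgt C f = x & Fm f = g].

Definition p_at (O : eqType) (M : finType) (L : eqType) (C : category O M)
  (lab : M -> L) (sigma tau : L) (f : M) : nat :=
  #|[set ab : M * M | [&& lab ab.1 == sigma, lab ab.2 == tau,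
                          src C ab.1 == tgt C ab.2 & comp C ab.1 ab.2 == f]]|.

(* p^mu_{sigma tau}, computed at some f in mu (0 if mu were empty). *)
Definition pnum (O : eqType) (M : finType) (L : eqType) (C : category O M)
  (lab : M -> L) (mu sigma tau : L) : nat :=
  if [pick f | lab f == mu] is Some f then p_at C lab sigma tau f else 0.

From Pilot Require Import Defs.
From mathcomp Require Import all_boot.
From Stdlib Require Import ProofIrrelevance ClassicalDescription.
Set Implicit Arguments. Unset Strict Implicit. Unset Printing Implicit Defensive.

(* Proof by double counting.  Fix g0 of label tau with t(g0) = phi(x0) and
   count the composable pairs (a, b) in pi x rho with t(a) = x0 and
   phi(a o b) = g0.  Grouped by the composite f = a o b, the count is the
   left-hand side (there are n_sigma such f of label sigma, each with
   p^sigma_{pi rho} decompositions); grouped by the image (phi a, phi b),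
   admissibility shows that the images are exactly the decompositions of g0,
   each with n_pi * n_rho preimages.  The quasi-schemoid axiom of D moves the
   list of decompositions from g0 to g.  If no such g0 exists, no sigma maps
   to tau and, D being a groupoid, g has no decomposition: both sides vanish. *)

Section SameCard.
Variable T : Type.

Lemma sig_eq (P : T -> Prop) (s1 s2 : sig P) : proj1_sig s1 = proj1_sig s2 -> s1 = s2.
Proof. by case: s1 s2 => x1 p1 [x2 p2] /= e; apply: subset_eq_compat. Qed.

Lemma same_card_ext (A B : T -> Prop) : (forall x, A x <-> B x) -> same_card A B.
Proof.
move=> eAB.
exists (fun s => exist B (proj1_sig s) (proj1 (eAB _) (proj2_sig s))).
exists (fun s => exist A (proj1_sig s) (proj2 (eAB _) (proj2_sig s))).
- by move=> s; apply: sig_eq.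
- by move=> s; apply: sig_eq.
Qed.

Lemma same_card_trans (A B E : T -> Prop) :
  same_card A B -> same_card B E -> same_card A E.
Proof. by move=> [h hbij] [k kbij]; exists (k \o h); apply: bij_comp. Qed.

End SameCard.

Lemma same_card_card (T : finType) (a b : pred T) :
  same_card (fun x => a x) (fun x => b x) -> #|a| = #|b|.
Proof. by case=> h /bij_eq_card; rewrite !card_sig. Qed.

Definition enumerates (T : eqType) (l : seq T) (A : T -> Prop) :=
  uniq l /\ forall x, x \in l <-> A x.

Lemma same_card_enumerates (T : eqType) (A B : T -> Prop) (l : seq T) :
  enumerates l A -> same_card A B ->
  exists l', enumerates l' B /\ size l' = size l.
Proof.
move=> [ul hl] [h [k hk kh]].
pose F y := if excluded_middle_informative (A y) is left p
            then proj1_sig (h (exist _ y p)) else y.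
have FE y (p : A y) : F y = proj1_sig (h (exist _ y p)).
  rewrite /F; case: excluded_middle_informative => // p'.
  by rewrite (proof_irrelevance _ p p').
exists (map F l); split; last by rewrite size_map.
split.
  rewrite map_inj_in_uniq // => y1 y2 /hl a1 /hl a2.
  rewrite (FE _ a1) (FE _ a2) => /sig_eq /(congr1 k).
  by rewrite !hk => /(congr1 (@proj1_sig _ _)).
move=> x; split.
  by case/mapP => y /hl ay ->; rewrite (FE _ ay); apply: proj2_sig.
move=> bx; apply/mapP; pose s := k (exist _ x bx).
exists (proj1_sig s); first by apply/hl; apply: proj2_sig.
rewrite (FE _ (proj2_sig s)).
have -> : exist _ (proj1_sig s) (proj2_sig s) = s by apply: sig_eq.
by rewrite kh.
Qed.

Lemma pnum_at (O : eqType) (M : finType) (L : eqType) (C : category O M)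
  (lab : M -> L) (mu sigma tau : L) (f : M) :
  quasi_schemoid C lab -> lab f = mu ->
  pnum C lab mu sigma tau = p_at C lab sigma tau f.
Proof.
move=> [_ qs] lf; rewrite /pnum.
case: pickP => [f' /eqP lf'|]; last by move/(_ f); rewrite lf eqxx.
have comp_pairsE h ab : comp_pairs C lab sigma tau h ab <->
    ab \in [set ab : M * M | [&& lab ab.1 == sigma, lab ab.2 == tau,
                                 src C ab.1 == tgt C ab.2 & Defs.comp C ab.1 ab.2 == h]].
  rewrite in_set; split; first by case=> -> -> -> ->; rewrite !eqxx.
  by case/and4P => /eqP ? /eqP ? /eqP ? /eqP ?.
apply: same_card_card; apply: same_card_trans (same_card_ext (comp_pairsE f)).
apply: same_card_trans (qs sigma tau mu f' f lf' lf).
by apply: same_card_ext => ab; rewrite comp_pairsE.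
Qed.

Lemma sum_partition_seq (I : finType) (J : eqType) (P : pred I) (key : I -> J)
  (l : seq J) (F : I -> nat) : uniq l -> (forall i, P i -> key i \in l) ->
  \sum_(i | P i) F i = \sum_(j <- l) \sum_(i | P i && (key i == j)) F i.
Proof.
move=> ul kl; rewrite -(exchange_big_dep predT) //=.
apply: eq_bigr => i Pi; rewrite big_const_seq.
have -> : count (fun j => key i == j) l = 1.
  rewrite (eq_count (a2 := pred1 (key i))); last by move=> j /=; rewrite eq_sym.
  by rewrite count_uniq_mem // kl.
by rewrite /= addn0.
Qed.

Section LiftedPairs.
Variables (CO : eqType) (CM SC : finType) (C : category CO CM) (labC : CM -> SC).
Variables (DO : Type) (DM TD : eqType) (D : category DO DM) (labD : DM -> TD).
Variables (Fo : CO -> DO) (Fm : CM -> DM) (Flab : SC -> TD) (n : SC -> nat).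
Hypothesis qsC : quasi_schemoid C labC.
Hypothesis Ffun : functor C D Fo Fm.
Hypothesis Flabel : forall f, labD (Fm f) = Flab (labC f).
Hypothesis adm : admissible C labC D labD Fo Fm Flab.
Hypothesis fibre_card : forall x sigma g, labD g = Flab sigma -> tgt D g = Fo x ->
  #|[set f : CM | [&& labC f == sigma, tgt C f == x & Fm f == g]]| = n sigma.
Variables (pi rho : SC) (x0 : CO) (g0 : DM).
Hypothesis tgt_g0 : tgt D g0 = Fo x0.

Let Fsrc : forall f, src D (Fm f) = Fo (src C f). Proof. by case: Ffun. Qed.
Let Ftgt : forall f, tgt D (Fm f) = Fo (tgt C f). Proof. by case: Ffun. Qed.
Let Fcomp : forall a b, src C a = tgt C b ->
  Fm (Defs.comp C a b) = Defs.comp D (Fm a) (Fm b).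
Proof. by case: Ffun. Qed.

Definition lifted (ab : CM * CM) : bool :=
  [&& labC ab.1 == pi, labC ab.2 == rho, src C ab.1 == tgt C ab.2,
      tgt C ab.1 == x0 & Fm (Defs.comp C ab.1 ab.2) == g0].

Definition image_pair (ab : CM * CM) : DM * DM := (Fm ab.1, Fm ab.2).

Definition image_pairs : seq (DM * DM) := undup (map image_pair (enum lifted)).

(* By admissibility, every decomposition of g0 in phi(pi) x phi(rho) lifts. *)
Lemma image_pairsP :
  enumerates image_pairs (comp_pairs D labD (Flab pi) (Flab rho) g0).
Proof.
split; first exact: undup_uniq.
move=> [a' b']; rewrite mem_undup; split.
  case/mapP => -[a b]; rewrite mem_enum => /and5P[/eqP la /eqP lb /eqP sab _ /eqP fab].
  by case=> -> ->; split; rewrite /= ?Flabel ?la ?lb ?Fsrc ?Ftgt ?sab -?Fcomp.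
case=> /= la lb sab cab.
have ta : tgt D a' = Fo x0 by rewrite -tgt_g0 -cab tgt_comp.
have [a [laa taa faa]] := adm la ta.
have tb : tgt D b' = Fo (src C a) by rewrite -sab -faa Fsrc.
have [b [lbb tbb fbb]] := adm lb tb.
apply/mapP; exists (a, b); last by rewrite /image_pair /= faa fbb.
by rewrite mem_enum unfold_in /lifted /= laa lbb tbb taa Fcomp // faa fbb cab !eqxx.
Qed.

(* Grouping by the composite: over each f with t(f) = x0 and phi(f) = g0
   there are p^{lab f}_{pi rho} lifted pairs. *)
Lemma card_lifted_by_composite :
  #|lifted| = \sum_(sigma | Flab sigma == labD g0) pnum C labC sigma pi rho * n sigma.
Proof.
rewrite -sum1_card (partition_big (fun ab => Defs.comp C ab.1 ab.2)
           (fun f => (tgt C f == x0) && (Fm f == g0))); last first.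
  move=> [a b] /and5P[_ _ /eqP sab /eqP ta /eqP fab] /=.
  by rewrite tgt_comp // ta fab !eqxx.
transitivity (\sum_(f | (tgt C f == x0) && (Fm f == g0)) pnum C labC (labC f) pi rho).
  apply: eq_bigr => f /andP[/eqP tf /eqP ff].
  rewrite (pnum_at pi rho qsC (erefl (labC f))) /p_at -sum1_card.
  apply: eq_bigl => -[a b]; rewrite inE unfold_in /lifted /=; apply/idP/idP.
    by case/andP => /and5P[-> -> -> _ _] ->.
  case/and4P => -> -> /eqP sab /eqP cab.
  by rewrite sab -tf -ff -cab tgt_comp // !eqxx.
rewrite (partition_big labC (fun s => Flab s == labD g0)); last first.
  by move=> f /andP[_ /eqP ff]; rewrite -Flabel ff.
apply: eq_bigr => s /eqP fs.
rewrite -(fibre_card (esym fs) tgt_g0) mulnC -sum_nat_const.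
by apply: eq_big => [f|f /andP[_ /eqP ->]] //; rewrite inE andbC.
Qed.

(* Grouping by the image: over each decomposition (a', b') of g0 there are
   n_pi choices of a and then n_rho choices of b. *)
Lemma card_lifted_over (a' b' : DM) :
  comp_pairs D labD (Flab pi) (Flab rho) g0 (a', b') ->
  \sum_(ab | lifted ab && (image_pair ab == (a', b'))) 1 = n pi * n rho.
Proof.
case=> /= la lb sab cab.
have ta : tgt D a' = Fo x0 by rewrite -tgt_g0 -cab tgt_comp.
pose over_a (a : CM) := [&& labC a == pi, tgt C a == x0 & Fm a == a'].
pose over_b (a b : CM) := [&& labC b == rho, tgt C b == src C a & Fm b == b'].
transitivity (\sum_(ab | over_a ab.1 && over_b ab.1 ab.2) 1).
  apply: eq_bigl => -[a b]; rewrite /lifted /image_pair /over_a /over_b /= xpair_eqE.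
  apply/idP/idP.
    case/andP => /and5P[-> -> sab' -> _] /andP[-> ->].
    by rewrite eq_sym sab'.
  case/andP => /and3P[-> -> /eqP fa] /and3P[-> /eqP tb /eqP fb].
  by rewrite tb Fcomp // fa fb cab !eqxx.
rewrite -(pair_big_dep over_a over_b (fun _ _ => 1)) /=.
transitivity (\sum_(a | over_a a) n rho).
  apply: eq_bigr => a /and3P[_ _ /eqP fa].
  rewrite -(fibre_card lb (_ : tgt D b' = Fo (src C a))); last by rewrite -sab -fa Fsrc.
  by rewrite -sum1_card; apply: eq_bigl => b; rewrite inE.
rewrite sum_nat_const -(fibre_card la ta); congr (_ * _).
by apply: eq_card => a; rewrite inE.
Qed.

(* Hence the lifted pairs number p^{tau}_{phi(pi) phi(rho)} * n_pi * n_rho,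
   the first factor being the length of the list image_pairs. *)
Lemma card_lifted_by_image : #|lifted| = size image_pairs * n pi * n rho.
Proof.
have [ul memP] := image_pairsP.
rewrite -sum1_card (sum_partition_seq (key := image_pair) _ ul); last first.
  by move=> ab lab; rewrite mem_undup; apply/mapP; exists ab; rewrite ?mem_enum.
rewrite -mulnA -count_predT -sum1_count big_distrl /=.
rewrite big_seq_cond [RHS]big_seq_cond.
by apply: eq_bigr => -[a' b'] /andP[/memP /card_lifted_over -> _]; rewrite mul1n.
Qed.

End LiftedPairs.

(* A label tau of D is realized when some morphism of label tau has its
   target in the image of phi on objects; only then can the fibres of phi
   over tau-morphisms be counted. *)
Definition realized (CO DO : Type) (DM TD : eqType) (D : category DO DM)
  (labD : DM -> TD) (Fo : CO -> DO) (tau : TD) :=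
  exists g0 x0, labD g0 = tau /\ tgt D g0 = Fo x0.

Section Realization.
Variables (CO CM SC : Type) (C : category CO CM) (labC : CM -> SC).
Variables (DO : Type) (DM TD : eqType) (D : category DO DM) (labD : DM -> TD).
Variables (Fo : CO -> DO) (Fm : CM -> DM) (Flab : SC -> TD).

(* Every block of S is nonempty, so each phi(sigma) is realized. *)
Lemma image_label_realized :
  quasi_schemoid C labC -> qs_morphism C labC D labD Fo Fm Flab ->
  forall sigma, realized D labD Fo (Flab sigma).
Proof.
move=> [surjC _] [[_ Ftgt _ _] Flabel] sigma.
have [f lf] := surjC sigma.
by exists (Fm f), (tgt C f); rewrite Flabel lf Ftgt.
Qed.

(* Realization passes to left factors: a realization of g o h decomposes,
   by the quasi-schemoid axiom, through a morphism of the label of g with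
   the same target. *)
Lemma realized_left_factor (g h : DM) :
  quasi_schemoid D labD -> src D g = tgt D h ->
  realized D labD Fo (labD (Defs.comp D g h)) -> realized D labD Fo (labD g).
Proof.
move=> [_ qsD] sgh [g0 [x0 [lg0 tg0]]].
have [k _] := qsD (labD g) (labD h) _ _ _ erefl lg0.
have gh_pair : comp_pairs D labD (labD g) (labD h) (Defs.comp D g h) (g, h) by [].
case: (k (exist _ (g, h) gh_pair)) => -[c d] [/= lc _ scd cd].
by exists c, x0; rewrite -tg0 -cd tgt_comp.
Qed.

(* In a groupoid every left factor a' of g = a' o b' is g o b'^-1; hence a
   decomposition of g in phi(pi) x phi(rho) forces labD g to be realized. *)
Lemma comp_pairs_realized (pi rho : SC) (g : DM) (ab : DM * DM) :
  quasi_schemoid C labC -> quasi_schemoid D labD -> groupoid D ->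
  qs_morphism C labC D labD Fo Fm Flab ->
  comp_pairs D labD (Flab pi) (Flab rho) g ab -> realized D labD Fo (labD g).
Proof.
move=> qsC qsD grpD Fmor [/= la _ sab cab].
have [b' [_ tb' _ bb']] := grpD ab.2.
apply: (realized_left_factor (h := b') qsD); first by rewrite tb' -cab src_comp.
have -> : Defs.comp D g b' = ab.1.
  by rewrite -cab -comp_assoc ?tb' // bb' -sab comp_idr.
by rewrite la; exact: image_label_realized qsC Fmor pi.
Qed.

End Realization.

Theorem lemma6p6 (CO : eqType) (CM : finType) (SC : finType)
  (C : category CO CM) (labC : CM -> SC)
  (DO : Type) (DM : eqType) (TD : eqType)
  (D : category DO DM) (labD : DM -> TD)
  (Fo : CO -> DO) (Fm : CM -> DM) (Flab : SC -> TD) (n : SC -> nat) :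
  quasi_schemoid C labC -> groupoid C ->
  basic D labD ->
  qs_morphism C labC D labD Fo Fm Flab ->
  admissible C labC D labD Fo Fm Flab ->
  (forall (x : CO) (sigma : SC) (g : DM), labD g = Flab sigma -> tgt D g = Fo x ->
     #|[set f : CM | [&& labC f == sigma, tgt C f == x & Fm f == g]]| = n sigma) ->
  forall (pi rho : SC) (tau : TD) (g : DM), labD g = tau ->
    exists l : seq (DM * DM),
      [/\ uniq l,
          (forall ab, ab \in l <-> comp_pairs D labD (Flab pi) (Flab rho) g ab) &
          \sum_(sigma : SC | Flab sigma == tau) pnum C labC sigma pi rho * n sigma
            = size l * n pi * n rho].
Proof.
move=> qsC _ [qsD _ grpD] Fmor adm hn pi rho tau g lg.
have [Ffun Flabel] := Fmor.
have [[g0 [x0 [lg0 tg0]]] | unrealized] := classic (realized D labD Fo tau).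
  (* Count at a realized g0, then move to g along the quasi-schemoid axiom. *)
  have [l [[ul memP] size_l]] := same_card_enumerates
    (image_pairsP Ffun Flabel adm pi rho tg0) (qsD.2 _ _ _ g0 g lg0 lg).
  exists l; split => //.
  by rewrite size_l -(card_lifted_by_image Ffun Flabel adm hn pi rho tg0)
             (card_lifted_by_composite qsC Flabel hn pi rho tg0) lg0.
exists [::]; split => // [ab|].
  split=> // /(comp_pairs_realized qsC qsD grpD Fmor); rewrite lg.
  by move/unrealized.
rewrite mul0n big1 // => sigma /eqP Fsigma.
by exfalso; apply: unrealized; rewrite -Fsigma; exact: image_label_realized qsC Fmor sigma.
Qed.
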